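(* Let $a_1,a_2,\dots$ and $b_0,b_1,\dots$ be arbitrary sequences of real numbers, let $0<p<1$, and let $J\subset\mathbb{Z}^+$ be a set of indices such that $a_j=0$ for all $j\in J$. Then \[ \sum_{m=1}^\infty\left|\frac{1}{mp}\sum_{k=1}^m b_{m-k}\,k\,a_k\sqrt{B(m,k,p)}\right|^2 \leqslant\left(\sum_{k\in\mathbb{Z}^+\setminus J}p^{k-2}\right)b_0^2\left(\sum_{k=1}^\infty a_k^2\right)+C_J(p)\left(\sum_{k=1}^\infty a_k^2\right)\left(\sum_{j=1}^\infty b_j^2\right). \]
   Context: $\mathbb{Z}^+$ denotes the set of positive integers. $B(m,k,p)=\binom{m}{k}p^k(1-p)^{m-k}$. For $J\subset\mathbb{Z}^+$, $s\in\mathbb{Z}^+$ and $0<p<1$, \[ h_J(s,p)=\frac{(1-p)^s}{p^2}\sum_{k\in\mathbb{Z}^+\setminus J}\frac{k^2}{(k+s)^2}\binom{k+s}{k}p^k,\qquad C_J(p)=\max_{s\in\mathbb{Z}^+}h_J(s,p). \] *)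

From mathcomp Require Import all_boot all_order all_algebra.
From mathcomp Require Import all_classical all_reals all_analysis.
Set Implicit Arguments. Unset Strict Implicit. Unset Printing Implicit Defensive.
Import Order.TTheory GRing.Theory Num.Theory.
Local Open Scope classical_set_scope.
Local Open Scope ring_scope.

Definition Bin {R : realType} (m k : nat) (p : R) : R :=
  'C(m, k)%:R * p ^+ k * (1 - p) ^+ (m - k).

Definition hJ {R : realType} (J : set nat) (s : nat) (p : R) : \bar R :=
  (((1 - p) ^+ s / p ^+ 2)%:E *
   \sum_(1 <= k <oo | k \notin J)
      ((k%:R ^+ 2 / (k + s)%:R ^+ 2 * 'C(k + s, k)%:R * p ^+ k)%:E))%E.

(* C_J(p) = max_{s in Z^+} h_J(s,p), taken as the supremum (equal to the max when attained) *)
Definition CJ {R : realType} (J : set nat) (p : R) : \bar R :=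
  ereal_sup [set hJ J s p | s in [set s : nat | (0 < s)%N]].

From mathcomp Require Import all_boot all_order all_algebra.
From mathcomp Require Import all_classical all_reals all_analysis.
From mathcomp Require Import ring zify.
Import Order.TTheory GRing.Theory Num.Theory.
Local Open Scope classical_set_scope.
Local Open Scope ring_scope.

(** As a_k = 0 on J, the inner sum runs over k ∉ J only, and
    Cauchy–Schwarz bounds its square by (Σ_k a_k²) · Σ_{k∉J} b_{m-k}² c_{m,k}²
    with c_{m,k} = k √B(m,k,p) / (m p). Summing over m and regrouping by
    j = m - k, the weight of b_j² is Σ_{k∉J} c_{j+k,k}². Since
    B(j+k,k,p) = C(k+j,k) p^k (1-p)^j, this weight is Σ_{k∉J} p^{k-2} for j = 0
    and exactly h_J(j,p) ≤ C_J(p) for j ≥ 1. Truncating at m ≤ N and letting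
    N → ∞ gives the inequality in the extended reals. *)

Lemma CauchySchwarz_sum (R : realDomainType) (I : Type) (r : seq I) (P : pred I)
    (x y : I -> R) :
  (\sum_(i <- r | P i) x i * y i) ^+ 2 <=
  (\sum_(i <- r | P i) x i ^+ 2) * (\sum_(i <- r | P i) y i ^+ 2).
Proof.
set S := \sum_(i <- r | P i) x i * y i.
set X := \sum_(i <- r | P i) x i ^+ 2.
set Y := \sum_(i <- r | P i) y i ^+ 2.
have lagrange : \sum_(i <- r | P i) \sum_(j <- r | P j) (x i * y j - x j * y i) ^+ 2
    = 2 * (X * Y - S ^+ 2).
  have expand i j : (x i * y j - x j * y i) ^+ 2 =
      x i ^+ 2 * y j ^+ 2 + y i ^+ 2 * x j ^+ 2 - 2 * (x i * y i) * (x j * y j).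
    by ring.
  under eq_bigr do under eq_bigr do rewrite expand.
  under eq_bigr do rewrite sumrB big_split /= -!mulr_sumr.
  rewrite sumrB big_split /= -!mulr_suml -mulr_sumr -/X -/Y -/S; ring.
have : 0 <= 2 * (X * Y - S ^+ 2).
  by rewrite -lagrange; do 2!(apply: sumr_ge0 => ? _); exact: sqr_ge0.
by rewrite pmulr_rge0 // subr_ge0.
Qed.

Lemma exchange_big_nat_subn (R : nmodType) (P : pred nat) (F : nat -> nat -> R) N :
  \sum_(1 <= m < N.+1) \sum_(1 <= k < m.+1 | P k) F (m - k)%N k =
  \sum_(0 <= j < N) \sum_(1 <= k < (N - j).+1 | P k) F j k.
Proof.
pose G j k := if P k then F j k else 0.
transitivity (\sum_(1 <= m < N.+1) \sum_(1 <= k < m.+1) G (m - k)%N k).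
  by apply: eq_bigr => m _; rewrite [LHS]big_mkcond.
transitivity (\sum_(0 <= j < N) \sum_(1 <= k < (N - j).+1) G j k); last first.
  by apply: eq_bigr => j _; rewrite [RHS]big_mkcond.
elim: N => [|N IH]; first by rewrite !big_geq.
rewrite big_nat_recr //= IH.
have -> : \sum_(0 <= j < N.+1) \sum_(1 <= k < (N.+1 - j).+1) G j k =
    \sum_(0 <= j < N.+1) \sum_(1 <= k < (N - j).+1) G j k +
    \sum_(0 <= j < N.+1) G j (N.+1 - j)%N.
  rewrite -big_split /=; apply: eq_big_nat => j /andP[_ hj].
  by rewrite subSn // big_nat_recr.
rewrite [in RHS]big_nat_recr //= subnn [X in _ + X + _]big_geq // addr0.
congr (_ + _); rewrite big_nat_rev /= big_add1 /=.
by apply: eq_big_nat => i /andP[_ hi]; congr (G _ _); lia.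
Qed.

Lemma Bin_ge0 (R : realType) m k (p : R) : 0 <= p <= 1 -> 0 <= Bin m k p.
Proof.
by case/andP=> p0 p1; rewrite /Bin !mulr_ge0 ?exprn_ge0 // subr_ge0.
Qed.

Section CoefficientBound.
Variables (R : realType) (p : R) (J : set nat).
Hypotheses (p_gt0 : 0 < p) (p_lt1 : p < 1).

Let p_in01 : 0 <= p <= 1. Proof. by rewrite !ltW. Qed.

Definition conv_coef m k := k%:R * Num.sqrt (Bin m k p) / (m%:R * p).

Lemma sqr_conv_coef_add j k : (0 < k)%N ->
  conv_coef (j + k) k ^+ 2 =
  (1 - p) ^+ j / p ^+ 2 * (k%:R ^+ 2 / (k + j)%:R ^+ 2 * 'C(k + j, k)%:R * p ^+ k).
Proof.
move=> k_gt0.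
have jk_neq0 : (j + k)%:R != 0 :> R by rewrite pnatr_eq0; lia.
rewrite /conv_coef !exprMn exprVn sqr_sqrtr ?Bin_ge0 ?p_in01 //.
rewrite /Bin addnK (addnC k j); field.
by rewrite -natrD jk_neq0 gt_eqF.
Qed.

Lemma sqr_conv_coef_diag k : (0 < k)%N -> conv_coef k k ^+ 2 = p ^+ k / p ^+ 2.
Proof.
move=> k_gt0; rewrite -{1 2}[k]add0n sqr_conv_coef_add // addn0 binn expr0.
field; by rewrite pnatr_eq0 -lt0n k_gt0 gt_eqF.
Qed.

Definition conv_weight n j := \sum_(1 <= k < n | k \notin J) conv_coef (j + k) k ^+ 2.

Lemma conv_weight0_le n :
  ((conv_weight n 0)%:E <= \sum_(1 <= k <oo | k \notin J) (p ^+ k / p ^+ 2)%:E)%E.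
Proof.
rewrite /conv_weight big_nat_cond (eq_bigr (fun k => p ^+ k / p ^+ 2)); last first.
  by move=> k /andP[/andP[k_gt0 _] _]; rewrite add0n sqr_conv_coef_diag.
rewrite -big_nat_cond -sumEFin; apply: nneseries_lim_ge => k _ _.
by rewrite lee_fin divr_ge0 ?exprn_ge0 ?ltW.
Qed.

Lemma conv_weight_le_hJ n j : ((conv_weight n j)%:E <= hJ J j p)%E.
Proof.
rewrite /conv_weight big_nat_cond (eq_bigr (fun k => (1 - p) ^+ j / p ^+ 2 *
    (k%:R ^+ 2 / (k + j)%:R ^+ 2 * 'C(k + j, k)%:R * p ^+ k))); last first.
  by move=> k /andP[/andP[k_gt0 _] _]; rewrite sqr_conv_coef_add.
rewrite -big_nat_cond -mulr_sumr EFinM /hJ.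
apply: lee_wpmul2l; first by rewrite lee_fin divr_ge0 ?exprn_ge0 ?subr_ge0 ?ltW.
rewrite -sumEFin; apply: nneseries_lim_ge => k _ _.
by rewrite lee_fin !mulr_ge0 ?invr_ge0 ?exprn_ge0 ?ler0n ?ltW.
Qed.

Lemma hJ_ge0 s : (0 <= hJ J s p)%E.
Proof.
apply: mule_ge0; first by rewrite lee_fin divr_ge0 ?exprn_ge0 ?subr_ge0 ?ltW.
by apply: nneseries_ge0 => k _ _; rewrite lee_fin !mulr_ge0 ?invr_ge0 ?exprn_ge0 ?ler0n ?ltW.
Qed.

Lemma hJ_le_CJ s : (0 < s)%N -> (hJ J s p <= CJ J p)%E.
Proof. by move=> s_gt0; apply: ereal_sup_ubound; exists s. Qed.

Lemma CJ_ge0 : (0 <= CJ J p)%E.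
Proof. exact: le_trans (hJ_ge0 1%N) (hJ_le_CJ 1%N isT). Qed.

Variables a b : nat -> R.
Hypothesis a_J : forall j, J j -> a j = 0.

Definition weighted_conv m :=
  (m%:R * p)^-1 * \sum_(1 <= k < m.+1) b (m - k)%N * k%:R * a k * Num.sqrt (Bin m k p).

Lemma weighted_convE m :
  weighted_conv m = \sum_(1 <= k < m.+1 | k \notin J) (b (m - k)%N * conv_coef m k) * a k.
Proof.
rewrite /weighted_conv mulr_sumr [RHS]big_mkcond /=; apply: eq_bigr => k _.
case: ifPn => [_ | /negPn/set_mem/a_J ->]; first by rewrite /conv_coef; ring.
by rewrite !(mulr0, mul0r).
Qed.

Lemma sqr_weighted_conv_le m N : (m <= N)%N ->
  weighted_conv m ^+ 2 <=
  (\sum_(1 <= k < m.+1 | k \notin J) b (m - k)%N ^+ 2 * conv_coef m k ^+ 2) *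
  \sum_(1 <= k < N.+1) a k ^+ 2.
Proof.
move=> le_mN; rewrite weighted_convE.
apply: le_trans (CauchySchwarz_sum _ _ _ _ _ _) _.
under eq_bigr do rewrite exprMn.
apply: ler_wpM2l; first by apply: sumr_ge0 => k _; rewrite mulr_ge0 ?sqr_ge0.
apply: (@le_trans _ _ (\sum_(1 <= k < m.+1) a k ^+ 2)).
  by rewrite [leLHS]big_mkcond ler_sum // => k _; case: ifP; rewrite ?sqr_ge0.
by rewrite [leRHS](big_cat_nat (n := m.+1)) //= lerDl sumr_ge0 // => k _; exact: sqr_ge0.
Qed.

Lemma sum_sqr_weighted_conv_le N :
  \sum_(1 <= m < N.+1) weighted_conv m ^+ 2 <=
  (\sum_(0 <= j < N) b j ^+ 2 * conv_weight (N - j).+1 j) *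
  \sum_(1 <= k < N.+1) a k ^+ 2.
Proof.
under [X in _ <= X * _]eq_bigr do rewrite mulr_sumr.
rewrite -exchange_big_nat_subn mulr_suml.
apply: ler_sum_nat => m /andP[_ le_mN].
apply: le_trans (@sqr_weighted_conv_le m N le_mN) _.
apply: ler_wpM2r; first by rewrite sumr_ge0 // => k _; exact: sqr_ge0.
rewrite big_nat_cond [leRHS]big_nat_cond.
by apply: ler_sum => k /andP[/andP[_ le_km] _]; rewrite subnK.
Qed.

Lemma sum_conv_weight_le N :
  ((\sum_(0 <= j < N) b j ^+ 2 * conv_weight (N - j).+1 j)%:E <=
   (b 0%N ^+ 2)%:E * \sum_(1 <= k <oo | k \notin J) (p ^+ k / p ^+ 2)%:E +
   CJ J p * \sum_(1 <= j <oo) (b j ^+ 2)%:E)%E.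
Proof.
have b_series_ge0 : (0 <= \sum_(1 <= j <oo) (b j ^+ 2)%:E)%E.
  by apply: nneseries_ge0 => j _ _; rewrite lee_fin sqr_ge0.
case: N => [|N].
  rewrite big_geq // adde_ge0 ?mule_ge0 ?CJ_ge0 ?lee_fin ?sqr_ge0 //.
  by apply: nneseries_ge0 => k _ _; rewrite lee_fin divr_ge0 ?exprn_ge0 ?ltW.
rewrite big_ltn // EFinD EFinM; apply: leeD.
  by apply: lee_wpmul2l; [rewrite lee_fin sqr_ge0 | exact: conv_weight0_le].
rewrite -sumEFin.
apply: (@le_trans _ _ (\sum_(1 <= j < N.+1) ((b j ^+ 2)%:E * CJ J p))%E).
  rewrite big_nat_cond [leRHS]big_nat_cond.
  apply: lee_sum => j /andP[/andP[j_gt0 _] _]; rewrite EFinM.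
  apply: lee_wpmul2l; first by rewrite lee_fin sqr_ge0.
  exact: le_trans (conv_weight_le_hJ _ _) (hJ_le_CJ _ j_gt0).
rewrite -ge0_sume_distrl; last by move=> j _; rewrite lee_fin sqr_ge0.
rewrite muleC; apply: lee_wpmul2l; first exact: CJ_ge0.
by apply: nneseries_lim_ge => k _ _; rewrite lee_fin sqr_ge0.
Qed.

Lemma partial_sum_sqr_weighted_conv_le N :
  ((\sum_(1 <= m < N.+1) weighted_conv m ^+ 2)%:E <=
   (\sum_(1 <= k <oo | k \notin J) (p ^+ k / p ^+ 2)%:E) * (b 0%N ^+ 2)%:E
     * (\sum_(1 <= k <oo) (a k ^+ 2)%:E)
   + CJ J p * (\sum_(1 <= k <oo) (a k ^+ 2)%:E) * (\sum_(1 <= j <oo) (b j ^+ 2)%:E))%E.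
Proof.
set S0 := (\sum_(1 <= k <oo | k \notin J) _)%E.
set A := (\sum_(1 <= k <oo) _)%E; set B := (\sum_(1 <= j <oo) _)%E.
have S0_ge0 : (0 <= S0)%E.
  by apply: nneseries_ge0 => k _ _; rewrite lee_fin divr_ge0 ?exprn_ge0 ?ltW.
have B_ge0 : (0 <= B)%E by apply: nneseries_ge0 => j _ _; rewrite lee_fin sqr_ge0.
have -> : (S0 * (b 0%N ^+ 2)%:E * A + CJ J p * A * B =
    A * ((b 0%N ^+ 2)%:E * S0 + CJ J p * B))%E.
  rewrite ge0_muleDr ?mule_ge0 ?lee_fin ?sqr_ge0 ?CJ_ge0 //.
  by congr (_ + _); [rewrite muleC (muleC S0) | rewrite muleCA muleA].
have := sum_sqr_weighted_conv_le N; rewrite -lee_fin mulrC EFinM => /le_trans; apply.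
apply: lee_pmul; last exact: sum_conv_weight_le.
- by rewrite lee_fin sumr_ge0 // => k _; exact: sqr_ge0.
- rewrite lee_fin sumr_ge0 // => j _; rewrite mulr_ge0 ?sqr_ge0 //.
  by rewrite sumr_ge0 // => k _; exact: sqr_ge0.
- by rewrite -sumEFin; apply: nneseries_lim_ge => k _ _; rewrite lee_fin sqr_ge0.
Qed.

End CoefficientBound.

Theorem lemma1 (R : realType) (a b : nat -> R) (p : R) (J : set nat)
  (hp0 : 0 < p) (hp1 : p < 1)
  (hJpos : J `<=` [set k : nat | (0 < k)%N])
  (haJ : forall j, J j -> a j = 0) :
  (\sum_(1 <= m <oo)
     (((m%:R * p)^-1 *
        \sum_(1 <= k < m.+1) b (m - k)%N * k%:R * a k * Num.sqrt (Bin m k p)) ^+ 2)%:E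
   <= (\sum_(1 <= k <oo | k \notin J) (p ^+ k / p ^+ 2)%:E) * (b 0%N ^+ 2)%:E
        * (\sum_(1 <= k <oo) (a k ^+ 2)%:E)
      + CJ J p * (\sum_(1 <= k <oo) (a k ^+ 2)%:E)
        * (\sum_(1 <= j <oo) (b j ^+ 2)%:E))%E.
Proof.
apply: lime_le; first by apply: is_cvg_nneseries => m _ _; rewrite lee_fin sqr_ge0.
near=> N; have /prednK <- : (0 < N)%N by near: N; exists 1%N.
by rewrite sumEFin; exact: partial_sum_sqr_weighted_conv_le.
Unshelve. all: by end_near.
Qed.
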